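(* Let $(\alpha,\beta)$ be an admissible, non-null pair. If there is no $x\in(0,1)$ with $\pi_x(\alpha)=\pi_x(\beta)$, then for every $x\in(0,1)$ the map $\pi_x:\Omega_{(\alpha,\beta)}\to[0,1]$ is strictly increasing (with respect to the lexicographic order on $\Omega_{(\alpha,\beta)}$).
   Context: $\Omega=\{0,1\}^{\infty}$ is the set of infinite binary strings $\omega=\omega_0\omega_1\cdots$; $S$ is the left shift $S(\omega_0\omega_1\cdots)=\omega_1\omega_2\cdots$; $\preceq$ is the lexicographic order ($\sigma\prec\omega$ iff $\sigma\ne\omega$ and $\sigma_k<\omega_k$ at the first index $k$ where they differ), with intervals $[\alpha,\beta]=\{\omega:\alpha\preceq\omega\preceq\beta\}$ and half-open analogues. A pair $(\alpha,\beta)$ is admissible if $\alpha_0=0,\alpha_1=1,\beta_0=1,\beta_1=0$ and $S^n\alpha\notin(\alpha,\beta]$, $S^n\beta\notin[\alpha,\beta)$ for all $n\ge0$. $\Omega_{(\alpha,\beta,-)}=\{\omega:S^n\omega\notin(\alpha,\beta]\ \forall n\ge0\}$, $\Omega_{(\alpha,\beta,+)}=\{\omega:S^n\omega\notin[\alpha,\beta)\ \forall n\ge0\}$, $\Omega_{(\alpha,\beta)}=\Omega_{(\alpha,\beta,-)}\cup\Omega_{(\alpha,\beta,+)}$. For $\Gamma\subseteq\Omega$, $\Gamma_n=\{\omega_0\cdots\omega_n:\omega\in\Gamma\}$, $h(\Gamma)=\limsup_n\frac1n\ln|\Gamma_n|$; the admissible pair is non-null if $h(\Omega_{(\alpha,\beta)})>0$.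 For $x\in[0,1)$, the projection map is $\pi_x(\omega)=(1-x)\sum_{k=0}^\infty\omega_kx^k$. *)

From Stdlib Require Import Reals Lra List Arith ClassicalEpsilon.
From Coquelicot Require Import Coquelicot.
Import ListNotations.
Open Scope R_scope.

Definition word := nat -> bool.

Definition shiftn (n : nat) (w : word) : word := fun k => w (n + k)%nat.

Definition weq (s w : word) : Prop := forall k, s k = w k.

Definition lex_lt (s w : word) : Prop :=
  exists k, (forall i, (i < k)%nat -> s i = w i) /\ s k = false /\ w k = true.
Definition lex_le (s w : word) : Prop := weq s w \/ lex_lt s w.

Definition in_oc (a b w : word) : Prop := lex_lt a w /\ lex_le w b.
Definition in_co (a b w : word) : Prop := lex_le a w /\ lex_lt w b.

Definition admissible (a b : word) : Prop :=
  a 0%nat = false /\ a 1%nat = true /\ b 0%nat = true /\ b 1%nat = false /\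
  (forall n, ~ in_oc a b (shiftn n a)) /\ (forall n, ~ in_co a b (shiftn n b)).

Definition Omega_minus (a b : word) (w : word) : Prop :=
  forall n, ~ in_oc a b (shiftn n w).
Definition Omega_plus (a b : word) (w : word) : Prop :=
  forall n, ~ in_co a b (shiftn n w).
Definition Omega_ab (a b : word) (w : word) : Prop :=
  Omega_minus a b w \/ Omega_plus a b w.

Fixpoint all_words (k : nat) : list (list bool) :=
  match k with
  | O => [[]]
  | S k' => map (cons false) (all_words k') ++ map (cons true) (all_words k')
  end.

Definition prefix_of (Gamma : word -> Prop) (n : nat) (u : list bool) : Prop :=
  exists w, Gamma w /\ u = map w (seq 0 (S n)).

Definition card_prefixes (Gamma : word -> Prop) (n : nat) : nat :=
  length (filter (fun u => if excluded_middle_informative (prefix_of Gamma n u)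
                           then true else false) (all_words (S n))).

Definition entropy (Gamma : word -> Prop) : Rbar :=
  LimSup_seq (fun n => ln (INR (card_prefixes Gamma n)) / INR n).

Definition non_null (a b : word) : Prop :=
  Rbar_lt (Finite 0) (entropy (Omega_ab a b)).

Definition proj (x : R) (w : word) : R :=
  (1 - x) * Series (fun k => if w k then x ^ k else 0).

(* Write [dsum x u = sum_k u_k x^k], so that [proj x = (1 - x) dsum x].  Call [x]
   separating if every word of [Omega_(a,b)] starting with [0] has [dsum] at most that of
   [a] and every word starting with [1] at least that of [b].  Words of [Omega_(a,b)]
   starting with [0] are lexicographically below [a] and those starting with [1] above
   [b], and tails of words of [Omega_(a,b)] stay in it; so at a separating [x] with
   [dsum x a < dsum x b], comparing two words at their first difference shows that [dsum x]
   is strictly increasing.  The same comparison shows that separation up to an error [e]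
   implies exact separation as soon as [2 e <= dsum x b - dsum x a].  Small [x] separate,
   and since [dsum] is Lipschitz in [x], this self-improvement carries separation along
   all of [(0, 1)], as the gap [dsum x b - dsum x a] never vanishes there. *)
From Stdlib Require Import Reals Lra Lia FunctionalExtensionality Classical.
From Coquelicot Require Import Coquelicot.
Open Scope R_scope.

Definition digit_term (x : R) (u : word) (k : nat) : R := if u k then x ^ k else 0.

Definition dsum (x : R) (u : word) : R := Series (digit_term x u).

Section DigitSeries.

Variable x : R.
Hypothesis Hx : 0 <= x < 1.

Lemma is_series_geom_unit : is_series (pow x) (/ (1 - x)).
Proof. apply is_series_geom. rewrite Rabs_pos_eq; lra. Qed.

Lemma digit_term_bounds u k : 0 <= digit_term x u k <= x ^ k.
Proof. unfold digit_term; destruct (u k); pose proof (pow_le x k (proj1 Hx)); lra. Qed.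

Lemma ex_series_digit_term u : ex_series (digit_term x u).
Proof.
  apply (@ex_series_le R_AbsRing R_CompleteNormedModule _ (pow x)).
  - intros k. change (Rabs (digit_term x u k) <= x ^ k).
    pose proof (digit_term_bounds u k). rewrite Rabs_pos_eq; lra.
  - eexists; exact is_series_geom_unit.
Qed.

Lemma dsum_bounds u : 0 <= dsum x u <= / (1 - x).
Proof.
  split.
  - rewrite <- (Rmult_0_l (Series (fun _ => 1))), <- Series_scal_l.
    apply Series_le; [|apply ex_series_digit_term].
    intros k. pose proof (digit_term_bounds u k). lra.
  - rewrite <- (is_series_unique _ _ is_series_geom_unit).
    apply Series_le; [apply digit_term_bounds|eexists; exact is_series_geom_unit].
Qed.

Lemma dsum_cons u : dsum x u = (if u 0%nat then 1 else 0) + x * dsum x (shiftn 1 u).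
Proof.
  unfold dsum. rewrite Series_incr_1 by apply ex_series_digit_term.
  rewrite <- Series_scal_l. f_equal.
  apply Series_ext; intros k. unfold digit_term, shiftn. simpl. destruct (u (S k)); ring.
Qed.

Lemma dsum_head0_le u : u 0%nat = false -> dsum x u <= x * / (1 - x).
Proof.
  intros H. rewrite dsum_cons, H.
  pose proof (dsum_bounds (shiftn 1 u)).
  assert (x * dsum x (shiftn 1 u) <= x * / (1 - x)) by (apply Rmult_le_compat_l; lra). lra.
Qed.

Lemma dsum_head1_ge u : u 0%nat = true -> 1 <= dsum x u.
Proof.
  intros H. rewrite dsum_cons, H.
  pose proof (dsum_bounds (shiftn 1 u)).
  assert (0 <= x * dsum x (shiftn 1 u)) by (apply Rmult_le_pos; lra). lra.
Qed.

Lemma dsum_sub_common_prefix k u v : (forall i, (i < k)%nat -> u i = v i) ->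
  dsum x u - dsum x v = x ^ k * (dsum x (shiftn k u) - dsum x (shiftn k v)).
Proof.
  revert u v; induction k as [|k IH]; intros u v Huv.
  - change (shiftn 0 u) with u; change (shiftn 0 v) with v; ring.
  - rewrite (dsum_cons u), (dsum_cons v), (Huv 0%nat) by lia.
    transitivity (x * (dsum x (shiftn 1 u) - dsum x (shiftn 1 v))); [ring|].
    rewrite (IH (shiftn 1 u) (shiftn 1 v)) by (intros i Hi; apply Huv; lia).
    change (shiftn k (shiftn 1 u)) with (shiftn (S k) u).
    change (shiftn k (shiftn 1 v)) with (shiftn (S k) v).
    simpl; ring.
Qed.

End DigitSeries.

Lemma dsum_weq x u v : weq u v -> dsum x u = dsum x v.
Proof. intros H. apply Series_ext; intros k. unfold digit_term. now rewrite H. Qed.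

Lemma Rabs_pow_sub_le x y r k : 0 <= x <= r -> 0 <= y <= r ->
  Rabs (x ^ S k - y ^ S k) <= INR (S k) * r ^ k * Rabs (x - y).
Proof.
  intros Hx Hy. induction k as [|k IH].
  - simpl. rewrite !Rmult_1_r. lra.
  - replace (x ^ S (S k) - y ^ S (S k)) with (x * (x ^ S k - y ^ S k) + y ^ S k * (x - y))
      by (unfold plus, opp; simpl; ring).
    eapply Rle_trans; [apply Rabs_triang|]. rewrite !Rabs_mult.
    rewrite (Rabs_pos_eq x), (Rabs_pos_eq (y ^ S k)) by (try apply pow_le; lra).
    assert (Hyk : y ^ S k <= r ^ S k) by (apply pow_incr; lra).
    pose proof (Rabs_pos (x - y)). pose proof (Rabs_pos (x ^ S k - y ^ S k)).
    assert (x * Rabs (x ^ S k - y ^ S k) <= r * (INR (S k) * r ^ k * Rabs (x - y)))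
      by (apply Rmult_le_compat; lra).
    assert (y ^ S k * Rabs (x - y) <= r ^ S k * Rabs (x - y)) by (apply Rmult_le_compat_r; lra).
    rewrite (S_INR (S k)). simpl in *. lra.
Qed.

Lemma is_series_succ_mul_pow r : 0 <= r < 1 ->
  is_series (fun n => INR (S n) * r ^ n) (/ (1 - r) ^ 2).
Proof.
  intros Hr.
  assert (G : is_series (pow r) (/ (1 - r))) by (apply is_series_geom_unit; lra).
  assert (A : ex_series (fun n => Rabs (r ^ n))).
  { eexists. eapply is_series_ext; [|exact G]. intros n. rewrite Rabs_pos_eq; [reflexivity|].
    apply pow_le; lra. }
  replace (/ (1 - r) ^ 2) with (/ (1 - r) * / (1 - r)) by (field; lra).
  eapply is_series_ext; [|exact (is_series_mult _ _ _ _ G G A A)]. intros n. simpl.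
  rewrite (sum_eq _ (fun _ => r ^ n)), sum_cte, <- S_INR; [destruct n; simpl; ring|].
  intros i Hi. rewrite <- pow_add. f_equal. lia.
Qed.

Lemma dsum_lipschitz x y r u : 0 <= x <= r -> 0 <= y <= r -> r < 1 ->
  Rabs (dsum x u - dsum y u) <= / (1 - r) ^ 2 * Rabs (x - y).
Proof.
  intros Hx Hy Hr.
  set (c n := match n with O => 0 | S k => INR (S k) * r ^ k * Rabs (x - y) end).
  assert (Hc : is_series c (/ (1 - r) ^ 2 * Rabs (x - y))).
  { apply is_series_decr_1.
    replace (plus _ (opp (c O))) with (/ (1 - r) ^ 2 * Rabs (x - y)) by (unfold plus, opp; simpl; ring).
    apply (is_series_scal_r (Rabs (x - y)) (fun n => INR (S n) * r ^ n)).
    apply is_series_succ_mul_pow; lra. }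
  assert (Hdc : forall n, Rabs (digit_term x u n - digit_term y u n) <= c n).
  { intros [|k]; unfold digit_term, c; destruct (u _); simpl pow.
    - rewrite Rminus_diag, Rabs_R0; lra.
    - rewrite Rminus_diag, Rabs_R0; lra.
    - apply (Rabs_pow_sub_le x y r k); lra.
    - rewrite Rminus_diag, Rabs_R0. pose proof (pos_INR (S k)).
      pose proof (pow_le r k ltac:(lra)). pose proof (Rabs_pos (x - y)).
      apply Rmult_le_pos; [apply Rmult_le_pos|]; lra. }
  assert (Habs : ex_series (fun n => Rabs (digit_term x u n - digit_term y u n))).
  { apply (@ex_series_le R_AbsRing R_CompleteNormedModule _ c); [|eexists; exact Hc].
    intros n. change (Rabs (Rabs (digit_term x u n - digit_term y u n)) <= c n).
    rewrite Rabs_Rabsolu. apply Hdc. }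
  unfold dsum. rewrite <- Series_minus by (apply ex_series_digit_term; lra).
  rewrite <- (is_series_unique _ _ Hc).
  eapply Rle_trans; [apply Series_Rabs, Habs|].
  apply Series_le; [|eexists; exact Hc].
  intros n. split; [apply Rabs_pos|apply Hdc].
Qed.

Lemma continuity_pt_locally_lipschitz (f : R -> R) c d L : 0 < d -> 0 <= L ->
  (forall t, Rabs (t - c) < d -> Rabs (f t - f c) <= L * Rabs (t - c)) ->
  continuity_pt f c.
Proof.
  intros Hd HL Hf eps Heps.
  exists (Rmin d (eps / (L + 1))). split.
  - apply Rmin_pos; [lra|apply Rdiv_lt_0_compat; lra].
  - intros t [_ Ht]. simpl in *. unfold R_dist in *.
    pose proof (Rmin_l d (eps / (L + 1))). pose proof (Rmin_r d (eps / (L + 1))).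
    assert (Hlt : Rabs (t - c) * (L + 1) < eps).
    { apply (Rmult_lt_reg_r (/ (L + 1))); [apply Rinv_0_lt_compat; lra|].
      rewrite Rmult_assoc, Rinv_r, Rmult_1_r by lra. unfold Rdiv in *. lra. }
    pose proof (Rabs_pos (t - c)). pose proof (Hf t ltac:(lra)). nra.
Qed.

Lemma continuity_pt_dsum u c : 0 < c < 1 -> continuity_pt (fun x => dsum x u) c.
Proof.
  intros Hc. set (r := (1 + c) / 2).
  apply (continuity_pt_locally_lipschitz _ c (Rmin c (1 - r)) (/ (1 - r) ^ 2)).
  - apply Rmin_pos; unfold r; lra.
  - left. apply Rinv_0_lt_compat, pow_lt. unfold r; lra.
  - intros t Ht. pose proof (Rmin_l c (1 - r)). pose proof (Rmin_r c (1 - r)).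
    unfold Rabs in Ht. destruct Rcase_abs in Ht;
    apply dsum_lipschitz; unfold r in *; lra.
Qed.

Lemma first_difference (s w : word) n : s n <> w n ->
  exists k, (forall i, (i < k)%nat -> s i = w i) /\ s k <> w k.
Proof.
  induction n as [n IH] using (well_founded_induction Wf_nat.lt_wf). intros Hn.
  destruct (classic (forall i, (i < n)%nat -> s i = w i)) as [Hpre|Hpre].
  - exists n; auto.
  - apply not_all_ex_not in Hpre as [i Hi].
    apply imply_to_and in Hi as [Hin Hi]. exact (IH i Hin Hi).
Qed.

Lemma lex_trichotomy s w : weq s w \/ lex_lt s w \/ lex_lt w s.
Proof.
  destruct (classic (weq s w)) as [E|E]; [left; exact E|right].
  apply not_all_ex_not in E as [n Hn].
  destruct (first_difference s w n Hn) as [k [Hpre Hk]].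
  destruct (s k) eqn:Es, (w k) eqn:Ew; try congruence.
  - right. exists k. split; [intros i Hi; symmetry; auto|auto].
  - left. exists k. auto.
Qed.

Lemma shiftn_shiftn n k (w : word) : shiftn n (shiftn k w) = shiftn (k + n) w.
Proof. apply functional_extensionality; intros j. unfold shiftn. f_equal. lia. Qed.

Lemma shiftn_head k (w : word) : shiftn k w 0%nat = w k.
Proof. unfold shiftn. now rewrite Nat.add_0_r. Qed.

Lemma Omega_ab_shiftn a b w k : Omega_ab a b w -> Omega_ab a b (shiftn k w).
Proof. intros [H|H]; [left|right]; intros n; rewrite shiftn_shiftn; apply H. Qed.

Lemma admissible_Omega_ab_l a b : admissible a b -> Omega_ab a b a.
Proof. intros (_&_&_&_&Ha&_). left. exact Ha. Qed.

Lemma admissible_Omega_ab_r a b : admissible a b -> Omega_ab a b b.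
Proof. intros (_&_&_&_&_&Hb). right. exact Hb. Qed.

Lemma Omega_ab_head0_lex_le a b s : b 0%nat = true -> Omega_ab a b s ->
  s 0%nat = false -> lex_le s a.
Proof.
  intros Hb0 Hs Hs0.
  assert (Hsb : lex_lt s b) by (exists 0%nat; split; [intros; lia|auto]).
  destruct (lex_trichotomy s a) as [E|[L|L]]; [left; exact E|right; exact L|exfalso].
  destruct Hs as [H|H]; apply (H 0%nat); split.
  - exact L.
  - right; exact Hsb.
  - right; exact L.
  - exact Hsb.
Qed.

Lemma Omega_ab_head1_lex_le a b s : a 0%nat = false -> Omega_ab a b s ->
  s 0%nat = true -> lex_le b s.
Proof.
  intros Ha0 Hs Hs0.
  assert (Has : lex_lt a s) by (exists 0%nat; split; [intros; lia|auto]).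
  destruct (lex_trichotomy b s) as [E|[L|L]]; [left; exact E|right; exact L|exfalso].
  destruct Hs as [H|H]; apply (H 0%nat); split.
  - exact Has.
  - right; exact L.
  - right; exact Has.
  - exact L.
Qed.

Definition gap (a b : word) (x : R) : R := dsum x b - dsum x a.

Definition head_separated (a b : word) (x e : R) : Prop :=
  forall s, Omega_ab a b s ->
  (s 0%nat = false -> dsum x s <= dsum x a + e) /\
  (s 0%nat = true -> dsum x b - e <= dsum x s).

Lemma dsum_sub_ge_of_lex_lt a b x e : 0 <= x < 1 -> head_separated a b x e ->
  forall u v, Omega_ab a b u -> Omega_ab a b v -> lex_lt u v ->
  exists k, x ^ k * (gap a b x - 2 * e) <= dsum x v - dsum x u.
Proof.
  intros Hx Hsep u v Hu Hv [k [Hpre [Huk Hvk]]]. exists k.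
  rewrite (dsum_sub_common_prefix x Hx k v u) by (intros i Hi; symmetry; auto).
  assert (Hu' := proj1 (Hsep _ (Omega_ab_shiftn a b u k Hu)) ltac:(now rewrite shiftn_head)).
  assert (Hv' := proj2 (Hsep _ (Omega_ab_shiftn a b v k Hv)) ltac:(now rewrite shiftn_head)).
  apply Rmult_le_compat_l; [apply pow_le; lra|]. unfold gap. lra.
Qed.

Lemma head_separated_exact a b x e : 0 <= x < 1 -> admissible a b ->
  head_separated a b x e -> 2 * e <= gap a b x -> head_separated a b x 0.
Proof.
  intros Hx Hadm Hsep Hgap s Hs. pose proof Hadm as (Ha0&_&Hb0&_).
  assert (Hmono : forall u v, Omega_ab a b u -> Omega_ab a b v -> lex_lt u v ->
                  dsum x u <= dsum x v).
  { intros u v Hu Hv Huv.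
    destruct (dsum_sub_ge_of_lex_lt a b x e Hx Hsep u v Hu Hv Huv) as [k Hk].
    assert (0 <= x ^ k * (gap a b x - 2 * e)) by (apply Rmult_le_pos; [apply pow_le|]; lra).
    lra. }
  rewrite Rplus_0_r, Rminus_0_r. split; intros Hs0.
  - destruct (Omega_ab_head0_lex_le a b s Hb0 Hs Hs0) as [E|L].
    + right. apply dsum_weq, E.
    + apply Hmono; [exact Hs|apply admissible_Omega_ab_l, Hadm|exact L].
  - destruct (Omega_ab_head1_lex_le a b s Ha0 Hs Hs0) as [E|L].
    + right. apply dsum_weq, E.
    + apply Hmono; [apply admissible_Omega_ab_r, Hadm|exact Hs|exact L].
Qed.

Lemma dsum_lt_of_head_separated a b x : 0 < x < 1 -> head_separated a b x 0 ->
  0 < gap a b x ->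
  forall u v, Omega_ab a b u -> Omega_ab a b v -> lex_lt u v -> dsum x u < dsum x v.
Proof.
  intros Hx Hsep Hgap u v Hu Hv Huv.
  destruct (dsum_sub_ge_of_lex_lt a b x 0 ltac:(lra) Hsep u v Hu Hv Huv) as [k Hk].
  assert (0 < x ^ k * (gap a b x - 2 * 0)) by (apply Rmult_lt_0_compat; [apply pow_lt|]; lra).
  lra.
Qed.

Lemma head_separated_small a b x : 0 < x <= 1/4 -> admissible a b ->
  head_separated a b x 0 /\ 0 < gap a b x.
Proof.
  intros Hx Hadm. pose proof Hadm as (Ha0&_&Hb0&_).
  assert (Hx' : 0 <= x < 1) by lra.
  pose proof (dsum_bounds x Hx' a). pose proof (dsum_bounds x Hx' b).
  pose proof (dsum_head0_le x Hx') as Hhead0. pose proof (dsum_head1_ge x Hx') as Hhead1.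
  pose proof (Hhead0 a Ha0). pose proof (Hhead1 b Hb0).
  set (t := / (1 - x)) in *.
  assert (Hxt : x * t = t - 1) by (unfold t; field; lra).
  assert (Ht : 1 <= t <= 4/3).
  { assert (Ht1 : t * (1 - x) = 1) by (unfold t; field; lra). split; nra. }
  assert (Hsep : head_separated a b x (t - 1)).
  { intros s _. split; intros Hs0; [pose proof (Hhead0 s Hs0)|pose proof (Hhead1 s Hs0)]; lra. }
  assert (Hgap : 2 - t <= gap a b x) by (unfold gap; lra).
  split; [apply (head_separated_exact a b x (t - 1)); try assumption|]; lra.
Qed.

Lemma head_separated_perturb a b x y r e : 0 <= x <= r -> 0 <= y <= r -> r < 1 ->
  head_separated a b x e ->
  head_separated a b y (e + 2 * (/ (1 - r) ^ 2 * Rabs (x - y))).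
Proof.
  intros Hx Hy Hr Hsep s Hs.
  pose proof (proj1 (Rabs_le_between _ _) (dsum_lipschitz x y r s Hx Hy Hr)).
  pose proof (proj1 (Rabs_le_between _ _) (dsum_lipschitz x y r a Hx Hy Hr)).
  pose proof (proj1 (Rabs_le_between _ _) (dsum_lipschitz x y r b Hx Hy Hr)).
  destruct (Hsep s Hs) as [Hs0_le Hs1_ge].
  split; intros Hs0; [specialize (Hs0_le Hs0)|specialize (Hs1_ge Hs0)]; lra.
Qed.

Lemma gap_lipschitz a b x y r : 0 <= x <= r -> 0 <= y <= r -> r < 1 ->
  Rabs (gap a b x - gap a b y) <= 2 * (/ (1 - r) ^ 2 * Rabs (x - y)).
Proof.
  intros Hx Hy Hr. apply Rabs_le_between.
  pose proof (proj1 (Rabs_le_between _ _) (dsum_lipschitz x y r a Hx Hy Hr)).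
  pose proof (proj1 (Rabs_le_between _ _) (dsum_lipschitz x y r b Hx Hy Hr)).
  unfold gap. lra.
Qed.

Lemma continuity_pt_gap a b x : 0 < x < 1 -> continuity_pt (gap a b) x.
Proof.
  intros Hx. apply (continuity_pt_minus (fun t => dsum t b) (fun t => dsum t a));
  apply continuity_pt_dsum, Hx.
Qed.

Lemma interval_step_induction (P : R -> Prop) lo hi d : 0 < d -> P lo ->
  (forall t t', lo <= t' -> t' <= t <= hi -> t - t' <= d -> P t' -> P t) ->
  forall t, lo <= t <= hi -> P t.
Proof.
  intros Hd Hlo Hstep.
  assert (Hn : forall n t, lo <= t <= hi -> t <= lo + INR n * d -> P t).
  { induction n as [|n IH]; intros t Ht Htn.
    - simpl in Htn. replace t with lo by lra. exact Hlo.
    - destruct (Rle_lt_dec t (lo + INR n * d)) as [Hle|Hgt]; [exact (IH t Ht Hle)|].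
      rewrite S_INR in Htn. pose proof (pos_INR n).
      pose proof (Rmax_l lo (t - d)). pose proof (Rmax_r lo (t - d)).
      assert (Hmax : Rmax lo (t - d) <= lo + INR n * d).
      { apply Rmax_lub; nra. }
      assert (Rmax lo (t - d) <= t) by (apply Rmax_lub; lra).
      apply (Hstep t (Rmax lo (t - d))); [lra|lra|lra|apply IH; lra]. }
  intros t Ht. destruct (INR_archimed d (hi - lo) Hd) as [n Hnd].
  apply (Hn n t Ht). lra.
Qed.

(* Separation at small [x] is carried up to [x] in steps of length [m / (4 K)], where
   [m > 0] is the minimum of [|gap|] on [[1/4, x]] and [K] the Lipschitz constant of
   [dsum] on [[0, r]]: along a step [gap] cannot change sign, so it stays [>= m]. *)
Lemma head_separated_unit_interval a b : admissible a b ->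
  (forall t, 0 < t < 1 -> gap a b t <> 0) ->
  forall x, 0 < x < 1 -> head_separated a b x 0 /\ 0 < gap a b x.
Proof.
  intros Hadm Hgap x Hx.
  destruct (Rle_lt_dec x (1/4)) as [Hsmall|Hlarge]; [apply head_separated_small; [lra|exact Hadm]|].
  set (r := (1 + x) / 2). set (K := / (1 - r) ^ 2).
  assert (HK : 0 < K) by (apply Rinv_0_lt_compat, pow_lt; unfold r; lra).
  destruct (continuity_ab_min (fun t => Rabs (gap a b t)) (1/4) x) as [tmin [Hmin Htmin]];
    [lra|intros c Hc; apply (continuity_pt_comp (gap a b) Rabs);
         [apply continuity_pt_gap; lra|apply Rcontinuity_abs]|].
  set (m := Rabs (gap a b tmin)) in *.
  assert (Hm : 0 < m) by (apply Rabs_pos_lt, Hgap; lra).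
  apply (interval_step_induction (fun t => head_separated a b t 0 /\ 0 < gap a b t)
           (1/4) x (m / (4 * K))); [|apply head_separated_small; [lra|exact Hadm]| |lra].
  { apply Rdiv_lt_0_compat; lra. }
  intros t t' Ht' Ht Htt' [Hsep' Hgap'].
  assert (HKd : K * (t - t') <= m / 4).
  { replace (m / 4) with (K * (m / (4 * K))) by (field; lra).
    apply Rmult_le_compat_l; lra. }
  pose proof (proj1 (Rabs_le_between _ _) (gap_lipschitz a b t t' r ltac:(unfold r; lra)
                                              ltac:(unfold r; lra) ltac:(unfold r; lra))) as Hlip.
  rewrite (Rabs_pos_eq (t - t')) in Hlip by lra. fold K in Hlip.
  assert (Hgapt : m <= gap a b t).
  { pose proof (Hmin t ltac:(lra)) as Habs. simpl in Habs.
    unfold Rabs in Habs. destruct Rcase_abs in Habs; lra. }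
  split; [|lra].
  apply (head_separated_exact a b t (0 + 2 * (K * Rabs (t' - t)))); [unfold r in *; lra|exact Hadm| |].
  - apply (head_separated_perturb a b t' t r); try (unfold r; lra). exact Hsep'.
  - rewrite Rabs_minus_sym, Rabs_pos_eq by lra. lra.
Qed.

Theorem lemma1 (a b : word) :
  admissible a b -> non_null a b ->
  ~ (exists x, 0 < x < 1 /\ proj x a = proj x b) ->
  forall x, 0 < x < 1 ->
  forall s w, Omega_ab a b s -> Omega_ab a b w ->
  lex_lt s w -> proj x s < proj x w.
Proof.
  intros Hadm _ Hnoeq x Hx s w Hs Hw Hsw.
  assert (Hgap : forall t, 0 < t < 1 -> gap a b t <> 0).
  { intros t Ht Hz. apply Hnoeq. exists t. split; [exact Ht|].
    change ((1 - t) * dsum t a = (1 - t) * dsum t b). unfold gap in Hz. f_equal. lra. }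
  destruct (head_separated_unit_interval a b Hadm Hgap x Hx) as [Hsep Hpos].
  change ((1 - x) * dsum x s < (1 - x) * dsum x w).
  apply Rmult_lt_compat_l; [lra|].
  exact (dsum_lt_of_head_separated a b x Hx Hsep Hpos s w Hs Hw Hsw).
Qed.
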